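(* Let $p$ be a prime, identify $V=\mathbb{F}_p^d$ with $\mathbb{F}_{p^d}$, let $\omega$ be a primitive element of $\mathbb{F}_{p^d}$, let $\hat\omega$ be the map $x\mapsto x\omega$ and $\varphi$ the map $x\mapsto x^p$, so $\Gamma L_1(p^d)=\langle\hat\omega,\varphi\rangle$. Suppose $H\le\Gamma L_1(p^d)$ is $p$-exceptional on $V$. Then $p$ divides $d$, and there is a factorisation $d=p^ks$ with $k\ge1$ and an integer $j$ dividing $p^s-1$ such that $K=\langle\hat\omega^{(p^s-1)/j},\varphi^s\rangle$ is a normal subgroup of $H$ of index coprime to $p$. Conversely, for any such $d=p^ks$ ($k\ge1$) and $j\mid p^s-1$, the group $K=\langle\hat\omega^{(p^s-1)/j},\varphi^s\rangle$ is $p$-exceptional and $\frac12$-transitive on $V^\sharp$, having $(p^s-1)/j$ orbits on $V^\sharp$, each of length $j(p^d-1)/(p^s-1)$; any subgroup of $\Gamma L_1(p^d)$ containing such a $K$ with index coprime to $p$ and meeting $\langle\hat\omega\rangle$ in $K\cap\langle\hat\omega\rangle$ is $p$-exceptional; and each such $K$ contains the $p$-exceptional group $\langle\hat\omega^{p^{d/p}-1},\varphi^{d/p}\rangle$.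
   Context: $G$ is $p$-exceptional on $V$ if $p$ divides $|G|$ and every orbit of $G$ on $V$ has size coprime to $p$. $V^\sharp$ is the set of nonzero vectors. $G$ is $\frac12$-transitive if all its orbits on $V^\sharp$ have equal size. *)

From HB Require Import structures.
From mathcomp Require Import all_boot all_order all_algebra all_fingroup all_solvable all_field.
Set Implicit Arguments. Unset Strict Implicit. Unset Printing Implicit Defensive.
Import GRing.Theory.

(* The permutation induced by f if f is injective (the identity otherwise;
   only used for injective f below). *)
Definition perm_of (T : finType) (f : T -> T) : {perm T} :=
  match injectiveP f with
  | ReflectT inj => perm inj
  | ReflectF _ => 1%g
  end.

Lemma perm_ofE (T : finType) (f : T -> T) : injective f -> forall x, perm_of f x = f x.
Proof.
move=> inj x; rewrite /perm_of; case: injectiveP => [i|/(_ inj)//].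
by rewrite permE.
Qed.

Definition omhat (F : finFieldType) (w : F) : {perm F} :=
  perm_of (fun x : F => (x * w)%R).

Definition frobp (F : finFieldType) (p : nat) : {perm F} :=
  perm_of (fun x : F => (x ^+ p)%R).

Definition GammaL1 (F : finFieldType) (p : nat) (w : F) : {set {perm F}} :=
  <<[set omhat w; frobp F p]>>%g.

Definition Kgrp (F : finFieldType) (p : nat) (w : F) (s j : nat) : {set {perm F}} :=
  <<[set (omhat w ^+ ((p ^ s - 1) %/ j))%g; (frobp F p ^+ s)%g]>>%g.

Definition p_exceptional (F : finFieldType) (p : nat) (G : {set {perm F}}) : Prop :=
  p %| #|G| /\ forall x : F, coprime #|orbit 'P G x| p.

Definition Vsharp (F : finFieldType) : {set F} := [set x : F | x != 0%R].

Definition half_transitive (F : finFieldType) (G : {set {perm F}}) : Prop :=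
  forall x y : F, x \in Vsharp F -> y \in Vsharp F ->
    #|orbit 'P G x| = #|orbit 'P G y|.

Definition orbits_sharp (F : finFieldType) (G : {set {perm F}}) : {set {set F}} :=
  orbit 'P G @: Vsharp F.

From HB Require Import structures.
From mathcomp Require Import all_boot all_order all_algebra all_fingroup all_solvable all_field.
Set Implicit Arguments. Unset Strict Implicit. Unset Printing Implicit Defensive.
Import GRing.Theory.
Local Open Scope group_scope.

(* Write N = p^d - 1, om = \hat\omega (multiplication by the primitive
   element w) and phi = \varphi (the Frobenius map), so that
   GammaL1 = <[om]> <[phi]> with <[om]> normal, cyclic of order N and acting
   semiregularly on V#, and <[phi]> cyclic of order d, equal to the stabiliser
   of 1.  For H <= GammaL1 and x != 0, the stabiliser H_x meets <[om]>
   trivially, which yields the orbit-length formula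
     |x^H| = |H : H_x <[om ^+ m]>| * (N / m)   whenever om ^+ m \in H, m | N.
   Forward direction: the p-part p^k of |H| is carried by the stabiliser of 1,
   hence by a subgroup <[phi ^+ s]> of <[phi]> with d = p^k s; this p-element
   lies in the normal p'-index subgroup H_w (H :&: <[om]>), and evaluating at w
   shows that H :&: <[om]> = <[om ^+ m]> with m | p^s - 1.  Conversely, for
   K = <om ^+ m, phi ^+ s> the element phi ^+ s maps each x != 0 into
   x <[om ^+ m]>, so every orbit of an overgroup L of K has length
   |L : L_x <[om ^+ m]>| * (N / m), a divisor of |L : K| * N, hence prime to p.
   The file first proves general group-theoretic and arithmetic facts, then
   the structure of GammaL1, the forward direction, the properties of K, and
   finally assembles the theorem. *)

Lemma sub_cycle_eq (gT : finGroupType) (a : gT) (X : {group gT}) :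
  X \subset <[a]> -> X :=: <[a ^+ (#[a] %/ #|X|)]>.
Proof.
move=> sXa; have /setP/(_ X) := cycle_sub_group (cardSg sXa).
by rewrite !inE sXa eqxx /= => /esym/eqP {1}->.
Qed.

Lemma pelt_in_normal (gT : finGroupType) (p : nat) (H Q : {group gT}) (x : gT) :
  prime p -> H \subset 'N(Q) -> coprime #|H : Q| p -> x \in H -> p.-elt x -> x \in Q.
Proof.
move=> hp nQH copQ xH px.
have nQx : x \in 'N(Q) := subsetP nQH x xH.
apply: coset_idr => //; apply/eqP; rewrite -order_eq1.
have dvdQ : #[coset Q x] %| #|H : Q|.
  by rewrite -card_quotient //; apply/order_dvdG/mem_quotient.
have pQx : p.-elt (coset Q x) by apply: morph_p_elt.
apply/eqP/(pnat_1 pQx); rewrite p'natE // -prime_coprime // coprime_sym.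
exact: coprime_dvdl dvdQ copQ.
Qed.

Lemma coprime_index_ppart (gT : finGroupType) (p : nat) (G K : {group gT}) :
  prime p -> K \subset G -> (p ^ logn p #|G|)%N %| #|K| -> coprime #|G : K| p.
Proof.
move=> hp sKG pK; rewrite coprime_sym prime_coprime //; apply/negP => pdiv.
have := dvdn_mul pK pdiv; rewrite Lagrange // -expnSr pfactor_dvdn ?cardG_gt0 //.
by rewrite ltnn.
Qed.

Lemma coprime_predX_p (p d : nat) : prime p -> 0 < d -> coprime (p ^ d).-1 p.
Proof.
move=> hp d0; have := coprimenS (p ^ d).-1.
rewrite prednK ?expn_gt0 ?prime_gt0 // => cop.
by apply: coprime_dvdr cop; rewrite -(prednK d0) expnS dvdn_mulr.
Qed.

Lemma Kparam_arith (p d k s j : nat) : prime p -> 0 < d ->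
  d = (p ^ k * s)%N -> j %| p ^ s - 1 ->
  [/\ 0 < j, ((p ^ s - 1) %/ j * j)%N = p ^ s - 1 & (p ^ s - 1) %/ j %| (p ^ d).-1].
Proof.
move=> hp d0 hd hj; have s0 : 0 < s by move: d0; rewrite hd muln_gt0 => /andP[].
have ps1 : 0 < p ^ s - 1 by rewrite subn_gt0 -{1}(expn0 p) ltn_exp2l ?prime_gt1.
have mj := divnK hj; split=> //; first exact: dvdn_gt0 ps1 hj.
apply: dvdn_trans (dvdn_mulr j (dvdnn _)) _; rewrite mj subn1.
by rewrite hd mulnC expnM dvdn_pred_predX.
Qed.

Lemma omhatE (F : finFieldType) (w x : F) : w != 0%R -> omhat w x = (x * w)%R.
Proof. by move=> w0; rewrite /omhat perm_ofE //; apply: mulIf. Qed.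

Lemma omhatXE (F : finFieldType) (w : F) (i : nat) (x : F) :
  w != 0%R -> (omhat w ^+ i) x = (x * w ^+ i)%R.
Proof.
move=> w0; elim: i x => [|i IH] x; first by rewrite expg0 perm1 expr0 mulr1.
by rewrite expgSr permM IH omhatE // exprSr mulrA.
Qed.

Lemma frobpE (F : finFieldType) (p : nat) (x : F) :
  p \in [pchar F]%R -> frobp F p x = (x ^+ p)%R.
Proof.
move=> hc; rewrite /frobp perm_ofE //.
exact: (fmorph_inj (pFrobenius_aut hc)).
Qed.

Lemma frobpXE (F : finFieldType) (p i : nat) (x : F) :
  p \in [pchar F]%R -> (frobp F p ^+ i) x = (x ^+ (p ^ i))%R.
Proof.
move=> hc; elim: i x => [|i IH] x; first by rewrite expg0 perm1 expr1.
by rewrite expgSr permM IH frobpE // expnSr exprM.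
Qed.

Section GammaL1Theory.

Variables (F : finFieldType) (p d : nat) (w : F).
Hypotheses (hp : prime p) (hF : #|F| = (p ^ d)%N)
           (hw : ((p ^ d).-1.-primitive_root w)%R).

Local Notation N := (p ^ d).-1.
Local Notation om := (omhat w).
Local Notation phi := (frobp F p).
Local Notation Gamma := (GammaL1 p w).

Lemma pcharF : p \in [pchar F]%R.
Proof. exact: card_finPcharP hF hp. Qed.

Lemma w_neq0 : w != 0%R.
Proof. by rewrite (prim_root_eq0 hw) -lt0n (prim_order_gt0 hw). Qed.

Lemma d_gt0 : 0 < d.
Proof.
rewrite lt0n; apply: contraTneq (finNzRing_gt1 F) => d0.
by rewrite hF d0.
Qed.

Lemma nonzero_powerw (x : F) : x != 0%R -> exists i, x = (w ^+ i)%R.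
Proof.
move=> x0; have : (x ^+ N = 1)%R.
  apply: (mulIf x0); rewrite mul1r -exprSr prednK ?expn_gt0 ?prime_gt0 //.
  by rewrite -hF expf_card.
by case/(prim_rootP hw) => i ->; exists i.
Qed.

Lemma omhatX_eq1 (n : nat) : (om ^+ n == 1) = (N %| n).
Proof.
rewrite (prim_order_dvd hw); apply/eqP/eqP => [omn1|wn1].
  have := congr1 (fun g : {perm F} => g 1%R) omn1.
  by rewrite omhatXE ?w_neq0 // perm1 mul1r.
by apply/permP => x; rewrite omhatXE ?w_neq0 // wn1 mulr1 perm1.
Qed.

Lemma order_omhat : #[om] = N.
Proof.
by apply/eqP; rewrite eqn_dvd order_dvdn omhatX_eq1 dvdnn -omhatX_eq1 expg_order eqxx.
Qed.

Lemma order_frobp : #[phi] = d.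
Proof.
have phid : phi ^+ d = 1.
  by apply/permP => x; rewrite frobpXE ?pcharF // -hF expf_card perm1.
have e_dvd : #[phi] %| d by rewrite order_dvdn phid.
apply/eqP; rewrite eqn_dvd e_dvd /=.
have /(congr1 (fun g : {perm F} => g w)) := expg_order phi.
rewrite frobpXE ?pcharF // perm1 => hwe.
have : (w ^+ (p ^ #[phi]) == w ^+ 1)%R by rewrite hwe expr1.
have p1 : 1 < (p ^ #[phi])%N by rewrite -{1}(expn0 p) ltn_exp2l ?prime_gt1.
rewrite (eq_prim_root_expr hw) eqn_mod_dvd 1?ltnW //.
move/dvdn_leq; rewrite subn_gt0 => /(_ p1).
rewrite -subn1 leq_sub2rE ?expn_gt0 ?prime_gt0 // leq_exp2l ?prime_gt1 //.
move=> le_de; suff -> : d = #[phi] by [].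
by apply/eqP; rewrite eqn_leq le_de dvdn_leq ?d_gt0.
Qed.

Lemma conj_omhat : om ^ phi = om ^+ p.
Proof.
apply/permP => z; rewrite /conjg !permM omhatXE ?w_neq0 // omhatE ?w_neq0 //.
rewrite frobpE ?pcharF // exprMn; congr (_ * _)%R.
by rewrite -frobpE ?pcharF // permKV.
Qed.

Lemma frob_norm : <[phi]> \subset 'N(<[om]>).
Proof. by rewrite norms_cycle conj_omhat mem_cycle. Qed.

Lemma Gamma_join : Gamma = <[om]> <*> <[phi]>.
Proof. by rewrite /GammaL1 joing_idl joing_idr. Qed.

Lemma Gamma_mul : Gamma = <[om]> * <[phi]>.
Proof. by rewrite Gamma_join norm_joinEr // frob_norm. Qed.

(* Every subgroup of <[om]> is normalised by GammaL1 (it is characteristic). *)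
Lemma Gamma_norm_subcycle (X : {group {perm F}}) :
  X \subset <[om]> -> Gamma \subset 'N(X).
Proof.
move=> sXom; apply: char_norm_trans (cycle_subgroup_char sXom) _.
by rewrite Gamma_join join_subG normG frob_norm.
Qed.

(* Each element x |-> (x * w^i)^(p^t) of GammaL1 fixes 0. *)
Lemma Gamma_fix0 (g : {perm F}) : g \in Gamma -> g 0%R = 0%R.
Proof.
rewrite Gamma_mul => /mulsgP[a f /cycleP[i ->] /cycleP[t ->] ->].
rewrite permM omhatXE ?w_neq0 // mul0r frobpXE ?pcharF //.
by rewrite expr0n expn_eq0 eqn0Ngt prime_gt0.
Qed.

Lemma Gamma_acts (L : {group {perm F}}) :
  L \subset Gamma -> [acts L, on Vsharp F | 'P].
Proof.
move=> sLG; apply/actsP => g gL x; rewrite !inE /= apermE.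
by rewrite -{1}(Gamma_fix0 (subsetP sLG _ gL)) (inj_eq perm_inj).
Qed.

Lemma Gamma_stab1 : 'C_Gamma[1%R | 'P] \subset <[phi]>.
Proof.
apply/subsetP => g; rewrite inE Gamma_mul => /andP[].
move=> /mulsgP[a f /cycleP[i ->] /cycleP[t ->] ->].
rewrite !inE /= sub1set inE apermE permM omhatXE ?w_neq0 // mul1r.
rewrite frobpXE ?pcharF // -(expr1n F (p ^ t)) -!frobpXE ?pcharF // => /eqP/perm_inj wi1.
have /eqP-> : om ^+ i == 1 by rewrite omhatX_eq1 (prim_order_dvd hw) wi1.
by rewrite mul1g mem_cycle.
Qed.

Lemma omhat_semiregular (g : {perm F}) (x : F) :
  g \in <[om]> -> x != 0%R -> g x = x -> g = 1.
Proof.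
case/cycleP => i -> x0; rewrite omhatXE ?w_neq0 // => xwi.
have /eqP wi1 : (w ^+ i = 1)%R by apply: (mulfI x0); rewrite xwi mulr1.
by apply/eqP; rewrite omhatX_eq1 (prim_order_dvd hw) wi1.
Qed.

(* Since GammaL1 / <[om]> is cyclic, any subgroup X of H containing
   H :&: <[om]> is normal in H. *)
Lemma normal_over (H X : {group {perm F}}) :
  H \subset Gamma -> X \subset H -> H :&: <[om]> \subset X -> H \subset 'N(X).
Proof.
move=> sHG sXH sCX; rewrite -commg_subr gen_subG.
apply/subsetP => z /imset2P[h x hH xX ->].
have xH := subsetP sXH _ xX.
apply: (subsetP sCX); rewrite inE groupR //=.
have : Gamma^`(1) \subset <[om]>.
  apply: der1_min; first by apply: Gamma_norm_subcycle.
  change (abelian (Gamma / <[om]>)).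
  rewrite Gamma_join quotientYidl ?frob_norm //.
  exact/cyclic_abelian/quotient_cyclic/cycle_cyclic.
by move/subsetP; apply; apply: mem_commg; apply: (subsetP sHG).
Qed.

Lemma order_frobX (k s : nat) : d = (p ^ k * s)%N -> #[phi ^+ s] = (p ^ k)%N.
Proof.
move=> hd; have s0 : 0 < s by move: d_gt0; rewrite hd muln_gt0 => /andP[].
by rewrite orderXdiv order_frobp ?hd ?mulnK // dvdn_mull.
Qed.

Lemma inter_omhat_cycle (H : {group {perm F}}) :
  H :&: <[om]> :=: <[om ^+ (N %/ #|H :&: <[om]>|)]>.
Proof. by rewrite {1}(sub_cycle_eq (subsetIr H _)) order_omhat. Qed.

Lemma Kgrp_subG (s j : nat) (L : {group {perm F}}) :
  om ^+ ((p ^ s - 1) %/ j) \in L -> phi ^+ s \in L -> Kgrp p w s j \subset L.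
Proof.
move=> omL phiL; rewrite gen_subG; apply/subsetP => g.
by rewrite !inE => /orP[]/eqP->.
Qed.

Lemma Kgrp_sub_Gamma (s j : nat) : Kgrp p w s j \subset Gamma.
Proof. by apply: Kgrp_subG; apply/groupX/mem_gen; rewrite !inE eqxx ?orbT. Qed.

(* Forward direction, step 1: a Sylow p-subgroup of the stabiliser of 1 in H
   carries the full p-part p^k of |H| (the orbit of 1 has p'-length) and lies
   in the cyclic group <[phi]> of order d; hence p^k divides d and H contains
   the unique subgroup <[phi ^+ (d %/ p^k)]> of order p^k. *)
Lemma exceptional_frob_power (H : {group {perm F}}) :
  H \subset Gamma -> p_exceptional p H ->
  [/\ 0 < logn p #|H|, (p ^ logn p #|H|)%N %| d & phi ^+ (d %/ p ^ logn p #|H|) \in H].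
Proof.
move=> sHG [pH hcop]; set k := logn p #|H|.
have k0 : 0 < k by rewrite logn_gt0 mem_primes hp cardG_gt0.
have [P sylP] := Sylow_exists p 'C_H[1%R | 'P].
have sPH1 := pHall_sub sylP.
have oP : #|P| = (p ^ k)%N.
  have iH1 : coprime p #|H : 'C_H[1%R | 'P]| by rewrite coprime_sym -card_orbit.
  rewrite (card_Hall sylP) p_part /k -(Lagrange (subsetIl H 'C[1%R | 'P])).
  by rewrite lognM ?cardG_gt0 ?indexg_gt0 // (logn_coprime iH1) addn0.
have sPphi : P \subset <[phi]>.
  by apply: subset_trans Gamma_stab1; apply: subset_trans sPH1 (setSI _ sHG).
have pkd : (p ^ k)%N %| d by rewrite -oP -order_frobp cardSg.
split=> //; apply: (subsetP (subset_trans sPH1 (subsetIl _ _))).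
by rewrite (sub_cycle_eq sPphi) order_frobp oP cycle_id.
Qed.

(* If phi^s = h * om^(m i) with h fixing w and m | N, then evaluating at w
   gives w^(p^s) = w^(1 + m i), so p^s = 1 modulo m. *)
Lemma frob_decomp_mod (A : {set {perm F}}) (m s : nat) :
  m %| N -> phi ^+ s \in 'C_A[w | 'P] * <[om ^+ m]> -> m %| p ^ s - 1.
Proof.
move=> mN /mulsgP[h c /setIP[_ /astab1P hw1] /cycleP[i ->] phis].
have /(congr1 (fun g : {perm F} => g w)) := phis.
rewrite permM [h w]hw1 -expgM omhatXE ?w_neq0 // frobpXE ?pcharF // -exprS.
move/eqP; rewrite (eq_prim_root_expr hw) => /eqP/(congr1 (modn^~ m)) /=.
rewrite !modn_dvdm // -addn1 mulnC modnMDl => /eqP.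
by rewrite eqn_mod_dvd // expn_gt0 prime_gt0.
Qed.

(* Forward direction, step 2: writing H :&: <[om]> = <[om ^+ m]>, the group
   Q = H_w <*> <[om ^+ m]> is normal in H of p'-index (the orbit of w has
   p'-length), so it contains every p-element phi ^+ s of H; hence
   m divides p^s - 1. *)
Lemma exceptional_inter_mod (H : {group {perm F}}) (s : nat) :
  H \subset Gamma -> p_exceptional p H -> phi ^+ s \in H -> p.-elt (phi ^+ s) ->
  N %/ #|H :&: <[om]>| %| p ^ s - 1.
Proof.
move=> sHG [_ hcop] phiH pphi; set C := (H :&: <[om]>)%G.
have CN : #|C| %| N by rewrite -order_omhat orderE cardSg ?subsetIr.
have nCHw : 'C_H[w | 'P] \subset 'N(C).
  apply: subset_trans (subsetIl _ _) (subset_trans sHG _).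
  exact: Gamma_norm_subcycle (subsetIr _ _).
set Q := ('C_H[w | 'P] <*> C)%G.
have sQH : Q \subset H by rewrite join_subG subsetIl subsetIl.
have nQH : H \subset 'N(Q) by apply: normal_over => //; apply: joing_subr.
have iQ : coprime #|H : Q| p.
  have := hcop w; rewrite card_orbit -(Lagrange_index sQH (joing_subl _ C)).
  by rewrite coprimeMl => /andP[].
have := pelt_in_normal hp nQH iQ phiH pphi.
rewrite /= norm_joinEl // (inter_omhat_cycle H : gval C = _).
by apply: frob_decomp_mod; rewrite -{2}(divnK CN) dvdn_mulr.
Qed.

(* The forward direction: with p^k the p-part of |H|, d = p^k s and
   H :&: <[om]> = <[om ^+ m]> where m | p^s - 1, the group
   K = <om ^+ m, phi ^+ s> (i.e. j = (p^s - 1) / m) lies between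
   H :&: <[om]> and H, so it is normal in H, and it has p'-index. *)
Lemma exceptional_structure (H : {group {perm F}}) :
  H \subset Gamma -> p_exceptional p H ->
  p %| d /\
  exists k s j : nat,
    [/\ d = (p ^ k * s)%N, 0 < k, j %| p ^ s - 1,
        Kgrp p w s j <| H & coprime #|H : Kgrp p w s j| p].
Proof.
move=> sHG excH; have [k0 pkd phiH] := exceptional_frob_power sHG excH.
set k := logn p #|H| in k0 pkd phiH; set s := d %/ p ^ k in phiH.
have hd : d = (p ^ k * s)%N by rewrite /s mulnC divnK.
have ophi : #[phi ^+ s] = (p ^ k)%N := order_frobX hd.
have pphi : p.-elt (phi ^+ s) by rewrite /p_elt ophi pnatX pnat_id.
have ms := exceptional_inter_mod sHG excH phiH pphi.
set m := N %/ #|H :&: <[om]>| in ms.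
have ps1 : 0 < p ^ s - 1.
  have s0 : 0 < s by move: d_gt0; rewrite hd muln_gt0 => /andP[].
  by rewrite subn_gt0 -{1}(expn0 p) ltn_exp2l ?prime_gt1.
have m0 : 0 < m.
  rewrite divn_gt0 ?cardG_gt0 // dvdn_leq ?(prim_order_gt0 hw) //.
  by rewrite -order_omhat orderE cardSg ?subsetIr.
have hmj : (p ^ s - 1) %/ ((p ^ s - 1) %/ m) = m.
  by rewrite -{1}(divnK ms) mulKn // divn_gt0 // dvdn_leq.
split; first by rewrite hd -(prednK k0) expnS -mulnA dvdn_mulr.
exists k, s, ((p ^ s - 1) %/ m).
have CE := inter_omhat_cycle H; rewrite -/m in CE.
have sCK : H :&: <[om]> \subset Kgrp p w s ((p ^ s - 1) %/ m).
  by rewrite CE cycle_subG mem_gen // hmj !inE eqxx.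
have sKH : Kgrp p w s ((p ^ s - 1) %/ m) \subset H.
  by apply: Kgrp_subG => //; rewrite hmj (subsetP (subsetIl H <[om]>)) // CE cycle_id.
split=> //; first by rewrite -{2}(divnK ms) dvdn_mulr.
  by rewrite /normal sKH normal_over.
apply: coprime_index_ppart hp _ _ => //; rewrite -/k -ophi.
by apply: order_dvdG; rewrite mem_gen // !inE eqxx orbT.
Qed.

(* phi ^+ s agrees on x = w^e with an element of <[om ^+ m]> when
   m j = p^s - 1: indeed x^(p^s) = x * w^(e (p^s - 1)). *)
Lemma frob_orbit_step (m s j : nat) (x : F) :
  (m * j)%N = p ^ s - 1 -> x != 0%R ->
  exists2 c, c \in <[om ^+ m]> & c x = (phi ^+ s) x.
Proof.
move=> mj x0; have [e ->] := nonzero_powerw x0.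
exists ((om ^+ m) ^+ (e * j)); first exact: mem_cycle.
rewrite -expgM omhatXE ?w_neq0 // frobpXE ?pcharF // -!exprM -exprD.
congr (w ^+ _)%R; rewrite mulnCA mj mulnBr muln1 subnKC // leq_pmulr //.
by rewrite expn_gt0 prime_gt0.
Qed.

(* Orbit-length formula: for a subgroup L of GammaL1 containing om ^+ m with
   m | N, the stabiliser L_x of x != 0 meets <[om ^+ m]> trivially, so the
   orbit of x has length |L : L_x <[om ^+ m]>| * (N / m). *)
Lemma orbit_card_stab_cycle (L : {group {perm F}}) (m : nat) (x : F) :
  L \subset Gamma -> om ^+ m \in L -> m %| N -> x != 0%R ->
  #|orbit 'P L x| = (#|L : 'C_L[x | 'P] <*> <[om ^+ m]>| * (N %/ m))%N.
Proof.
move=> sLG omL mN x0; set C := <[om ^+ m]>.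
have sLxL : 'C_L[x | 'P] \subset L := subsetIl _ _.
have nC : 'C_L[x | 'P] \subset 'N(C).
  apply: subset_trans sLxL (subset_trans sLG (Gamma_norm_subcycle _)).
  by rewrite cycle_subG mem_cycle.
have sQL : 'C_L[x | 'P] <*> C \subset L by rewrite join_subG sLxL cycle_subG.
have ti : 'C_L[x | 'P] :&: C = 1.
  apply/trivgP/subsetP => g /setIP[/setIP[_ /astab1P /= gx] gC].
  rewrite inE; apply/eqP; apply: omhat_semiregular gx => //.
  by apply: subsetP gC; rewrite cycle_subG mem_cycle.
have oC : #|C| = (N %/ m)%N by rewrite -orderE orderXdiv order_omhat.
have iQ : #|'C_L[x | 'P] <*> C : 'C_L[x | 'P]| = #|C|.
  apply/eqP; rewrite -(eqn_pmul2l (cardG_gt0 'C_L[x | 'P])) Lagrange ?joing_subl //.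
  by rewrite /= norm_joinEl // TI_cardMg.
by rewrite card_orbit -(Lagrange_index sQL (joing_subl _ C)) iQ oC.
Qed.

Section TheGroupK.

Variables (k s j : nat).
Hypotheses (hd : d = (p ^ k * s)%N) (hk : 0 < k) (hj : j %| p ^ s - 1).

Local Notation m := ((p ^ s - 1) %/ j).
Local Notation K := (Kgrp p w s j).

Lemma omhatX_in_K : om ^+ m \in K.
Proof. by rewrite mem_gen // !inE eqxx. Qed.

Lemma frobX_in_K : phi ^+ s \in K.
Proof. by rewrite mem_gen // !inE eqxx orbT. Qed.

(* For x != 0 and K <= L, the group L_x <[om ^+ m]> contains K, since
   phi ^+ s moves x within its <[om ^+ m]>-orbit. *)
Lemma K_sub_stab_cycle (L : {group {perm F}}) (x : F) :
  K \subset L -> x != 0%R -> K \subset 'C_L[x | 'P] <*> <[om ^+ m]>.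
Proof.
move=> sKL x0; have [_ mj _] := Kparam_arith hp d_gt0 hd hj.
apply: Kgrp_subG; first by rewrite mem_gen // inE cycle_id orbT.
have [c cC cx] := frob_orbit_step mj x0.
have cL : c \in L.
  by apply: (subsetP sKL); apply: subsetP cC; rewrite cycle_subG omhatX_in_K.
have phiLx : phi ^+ s * c^-1 \in 'C_L[x | 'P].
  rewrite inE groupM ?groupV ?(subsetP sKL _ frobX_in_K) //=.
  by apply/astab1P; rewrite /= apermE permM -cx permK.
have -> : phi ^+ s = (phi ^+ s * c^-1) * c by rewrite mulgKV.
by rewrite groupM ?(subsetP (joing_subl _ _) _ phiLx) ?(subsetP (joing_subr _ _) _ cC).
Qed.

(* Every overgroup L of K of p'-index in GammaL1 is p-exceptional: p^k = #[phi ^+ s]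
   divides |L|, and a nonzero orbit has length |L : L_x <[om ^+ m]>| (dividing
   |L : K|) times N / m (dividing p^d - 1). *)
Lemma exceptional_overgroup (L : {group {perm F}}) :
  L \subset Gamma -> K \subset L -> coprime #|L : K| p -> p_exceptional p L.
Proof.
move=> sLG sKL cop; have [_ _ mN] := Kparam_arith hp d_gt0 hd hj; split.
  apply: dvdn_trans (cardSg sKL); apply: dvdn_trans (order_dvdG frobX_in_K).
  by rewrite (order_frobX hd) -(prednK hk) expnS dvdn_mulr.
move=> x; have [->|x0] := eqVneq x 0%R.
  rewrite card_orbit; have -> : 'C_L[0%R | 'P] = L.
    apply/setIidPl/subsetP => g gL; apply/astab1P => /=.
    by rewrite apermE Gamma_fix0 // (subsetP sLG).
  by rewrite indexgg coprime1n.
have omL := subsetP sKL _ omhatX_in_K.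
rewrite (orbit_card_stab_cycle sLG omL mN x0) coprimeMl; apply/andP; split.
  apply: coprime_dvdl cop.
  rewrite -(Lagrange_index _ (K_sub_stab_cycle sKL x0)) ?dvdn_mulr //.
  by rewrite join_subG subsetIl cycle_subG.
apply: coprime_dvdl (coprime_predX_p hp d_gt0).
by rewrite -{2}(divnK mN) dvdn_mulr.
Qed.

(* Every nonzero orbit of K has length N / m (here L_x <[om ^+ m]> = K). *)
Lemma K_orbit (x : F) : x != 0%R -> #|orbit 'P K x| = (N %/ m)%N.
Proof.
move=> x0; have [_ _ mN] := Kparam_arith hp d_gt0 hd hj.
rewrite (orbit_card_stab_cycle (Kgrp_sub_Gamma s j) omhatX_in_K mN x0).
by move: (K_sub_stab_cycle (subxx K) x0); rewrite -indexg_eq1 => /eqP->; rewrite mul1n.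
Qed.

(* The |V#| = N nonzero vectors split into orbits of common length N / m,
   so there are m of them. *)
Lemma K_orbit_count : #|orbits_sharp K| = m.
Proof.
have [_ _ mN] := Kparam_arith hp d_gt0 hd hj.
have := card_partition (orbit_partition (Gamma_acts (Kgrp_sub_Gamma s j))).
have -> : #|Vsharp F| = N.
  by rewrite -hF -(cardsC1 0%R); apply: eq_card => x; rewrite !inE.
rewrite (eq_bigr (fun _ => N %/ m)%N); last first.
  by move=> A /imsetP[x]; rewrite inE => x0 ->; apply: K_orbit.
rewrite sum_nat_const /orbits_sharp => hN.
have N0 : 0 < N := prim_order_gt0 hw.
have Nm0 : 0 < N %/ m by rewrite divn_gt0 ?(dvdn_gt0 N0 mN) // dvdn_leq.
by apply/eqP; rewrite -(eqn_pmul2r Nm0) -hN mulnC divnK.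
Qed.

Lemma K_exceptional : p_exceptional p K.
Proof.
apply: exceptional_overgroup (Kgrp_sub_Gamma s j) (subxx _) _.
by rewrite indexgg coprime1n.
Qed.

(* Since p | d, the group obtained from d = p^1 (d / p) and j = 1 is
   defined, and it is contained in K: s | d / p gives m | p^(d/p) - 1,
   and phi ^+ (d / p) is a power of phi ^+ s. *)
Lemma d_factor_p : d = (p ^ 1 * (d %/ p))%N.
Proof. by rewrite expn1 mulnC divnK // hd -(prednK hk) expnS -mulnA dvdn_mulr. Qed.

Lemma minimal_K_sub : Kgrp p w (d %/ p) 1 \subset K.
Proof.
have [_ mj _] := Kparam_arith hp d_gt0 hd hj.
have dp : (d %/ p = s * p ^ k.-1)%N.
  by rewrite hd -(prednK hk) expnS -mulnA mulKn ?prime_gt0 // mulnC.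
apply: Kgrp_subG; last by rewrite dp expgM groupX ?frobX_in_K.
have : m %| p ^ (d %/ p) - 1.
  apply: dvdn_trans (dvdn_mulr j (dvdnn _)) _; rewrite mj !subn1.
  by rewrite dp expnM dvdn_pred_predX.
by rewrite divn1; case/dvdnP=> t ->; rewrite mulnC expgM groupX ?omhatX_in_K.
Qed.

End TheGroupK.

End GammaL1Theory.

Local Close Scope group_scope.

Theorem lemma2p7 (F : finFieldType) (p d : nat) (w : F)
  (hp : prime p) (hF : #|F| = (p ^ d)%N)
  (hw : ((p ^ d).-1.-primitive_root w)%R) :
  (* forward direction *)
  (forall H : {group {perm F}},
     H \subset GammaL1 p w -> p_exceptional p H ->
     p %| d /\
     exists k s j : nat,
       [/\ d = (p ^ k * s)%N, 0 < k, j %| p ^ s - 1,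
           (Kgrp p w s j <| H)%g & coprime #|H : Kgrp p w s j|%g p])
  /\
  (* converse *)
  (forall k s j : nat,
     d = (p ^ k * s)%N -> 0 < k -> j %| p ^ s - 1 ->
     [/\ p_exceptional p (Kgrp p w s j) /\ half_transitive (Kgrp p w s j),
         #|orbits_sharp (Kgrp p w s j)| = ((p ^ s - 1) %/ j)%N,
         (forall x : F, x \in Vsharp F ->
            #|orbit 'P (Kgrp p w s j) x| = (j * (p ^ d - 1) %/ (p ^ s - 1))%N),
         (forall L : {group {perm F}},
            L \subset GammaL1 p w ->
            Kgrp p w s j \subset L ->
            coprime #|L : Kgrp p w s j|%g p ->
            (L :&: <[omhat w]>%g = Kgrp p w s j :&: <[omhat w]>%g) ->
            p_exceptional p L)
       & <<[set (omhat w ^+ (p ^ (d %/ p) - 1))%g; (frobp F p ^+ (d %/ p))%g]>>%g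
           \subset Kgrp p w s j
         /\ p_exceptional p
              <<[set (omhat w ^+ (p ^ (d %/ p) - 1))%g; (frobp F p ^+ (d %/ p))%g]>>%g]).
Proof.
split=> [H|k s j hd hk hj]; first exact: exceptional_structure.
have [j0 mj _] := Kparam_arith hp (d_gt0 hF) hd hj.
have K1E : <<[set (omhat w ^+ (p ^ (d %/ p) - 1))%g; (frobp F p ^+ (d %/ p))%g]>>%g
   = Kgrp p w (d %/ p) 1 by rewrite /Kgrp divn1.
split.
- split; first exact: (K_exceptional hp hF hw hd hk hj).
  move=> x y; rewrite !inE => x0 y0.
  by rewrite (K_orbit hp hF hw hd hj x0) (K_orbit hp hF hw hd hj y0).
- exact: (K_orbit_count hp hF hw hd hj).
- move=> x; rewrite inE => x0; rewrite (K_orbit hp hF hw hd hj x0).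
  set m := (p ^ s - 1) %/ j in mj *.
  by rewrite [p ^ d - 1]subn1 -mj (mulnC m j) divnMl.
- by move=> L sLG sKL cop _; apply: (exceptional_overgroup hp hF hw hd hk hj).
- rewrite K1E; split; first exact: (minimal_K_sub w hp hF hd hk hj).
  exact: (K_exceptional hp hF hw (d_factor_p hd hk) (ltnSn 0) (dvd1n _)).
Qed.
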